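(* Let $X$ be a real Banach space and $A: X\rightrightarrows X^*$ maximal monotone. For every $w\in\mathrm{dom}(A)$, $v^*\in\mathrm{Im}(A)$ and $(x,x^* )\in X\times X^*$: (i) $F_A(x,v^* )\le g_{A,v^*}^*(x)\le P_A(x,v^* )$; (ii) $F_A(w,x^* )\le f_{A,w}^*(x^* )\le P_A(w,x^* )$.
   Context: $F_A(x,x^* )=\sup_{(y,y^* )\in\mathrm{Gr}(A)}\{\langle y,x^*\rangle+\langle x,y^*\rangle-\langle y,y^*\rangle\}$. Let $\phi(x,x^* )=\langle x,x^*\rangle$ if $(x,x^* )\in\mathrm{Gr}(A)$ and $+\infty$ otherwise; $P_A$ is the restriction to $X\times X^*$ of the biconjugate $\phi^{**}$. $f_{A,w}(x)=\inf_{a^*\in X^*}\{P_A(x,a^* )-\langle w,a^*\rangle\}$ and $g_{A,v^*}(x^* )=\inf_{a\in X}\{P_A(a,x^* )-\langle a,v^*\rangle\}$. The conjugates are $f_{A,w}^*(x^* )=\sup_{y\in X}\{\langle y,x^*\rangle-f_{A,w}(y)\}$ and $g_{A,v^*}^*(x)=\sup_{y^*\in X^*}\{\langle x,y^*\rangle-g_{A,v^*}(y^* )\}$. *)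

From HB Require Import structures.
From mathcomp Require Import all_boot all_order all_algebra.
From mathcomp Require Import all_classical all_reals all_analysis.
Set Implicit Arguments. Unset Strict Implicit. Unset Printing Implicit Defensive.
Import Order.TTheory GRing.Theory Num.Theory.
Import numFieldNormedType.Exports.
Local Open Scope classical_set_scope.
Local Open Scope ring_scope.

Section Fitz.
Variables (R : realType) (X : normedModType R).

Definition lin_fun (f : X -> R) : Prop :=
  forall (a : R) (u v : X), f (a *: u + v) = a * f u + f v.
Definition dual : set (X -> R) := [set f | lin_fun f /\ continuous f].

Definition dnorm (f : X -> R) : \bar R :=
  ereal_sup [set (`|f x|)%:E | x in [set x : X | `|x| <= 1]].

Definition bidual : set ((X -> R) -> R) :=
  [set Phi | (forall f g, dual f -> dual g -> Phi (f \+ g) = Phi f + Phi g)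
          /\ (forall (a : R) f, dual f -> Phi (fun x => a * f x) = a * Phi f)
          /\ exists C : R, forall f, dual f -> ((`|Phi f|)%:E <= C%:E * dnorm f)%E].

(* A set-valued operator A : X ⇉ X^star given by its graph relation A x x^star. *)
Definition graph (A : X -> (X -> R) -> Prop) : set (X * (X -> R)) :=
  [set p | A p.1 p.2].
Definition domA (A : X -> (X -> R) -> Prop) : set X := [set x | exists xs, A x xs].
Definition ImA (A : X -> (X -> R) -> Prop) : set (X -> R) := [set xs | exists x, A x xs].

Definition monotone_op (A : X -> (X -> R) -> Prop) : Prop :=
  forall x y xs ys, A x xs -> A y ys -> 0 <= xs (x - y) - ys (x - y).

Definition maximal_monotone (A : X -> (X -> R) -> Prop) : Prop :=
  (forall x xs, A x xs -> dual xs) /\ monotone_op A /\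
  (forall x xs, dual xs ->
     (forall y ys, A y ys -> 0 <= xs (x - y) - ys (x - y)) -> A x xs).

Local Open Scope ereal_scope.

Definition Fitz (A : X -> (X -> R) -> Prop) (x : X) (xs : X -> R) : \bar R :=
  ereal_sup [set ((xs p.1 + p.2 x - p.2 p.1)%R)%:E | p in graph A].

Definition phiA (A : X -> (X -> R) -> Prop) (x : X) (xs : X -> R) : \bar R :=
  if `[< A x xs >] then (xs x)%:E else +oo.

(* phi^star on X^star x X^starstar (dual of X x X^star) *)
Definition phistar (A : X -> (X -> R) -> Prop) (ys : X -> R) (Y : (X -> R) -> R)
  : \bar R :=
  ereal_sup [set ((ys p.1 + Y p.2)%R)%:E - phiA A p.1 p.2
            | p in [set p : X * (X -> R) | dual p.2]].

(* P_A = restriction of phi^starstar to X x X^star (via canonical embeddings) *)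
Definition PA (A : X -> (X -> R) -> Prop) (x : X) (xs : X -> R) : \bar R :=
  ereal_sup [set ((q.1 x + q.2 xs)%R)%:E - phistar A q.1 q.2
            | q in [set q : (X -> R) * ((X -> R) -> R) | dual q.1 /\ bidual q.2]].

Definition fAw (A : X -> (X -> R) -> Prop) (w : X) (x : X) : \bar R :=
  ereal_inf [set PA A x a - (a w)%:E | a in dual].

Definition gAv (A : X -> (X -> R) -> Prop) (vs : X -> R) (xs : X -> R) : \bar R :=
  ereal_inf [set PA A a xs - (vs a)%:E | a in [set: X]].

Definition fAw_conj (A : X -> (X -> R) -> Prop) (w : X) (xs : X -> R) : \bar R :=
  ereal_sup [set (xs y)%:E - fAw A w y | y in [set: X]].

Definition gAv_conj (A : X -> (X -> R) -> Prop) (vs : X -> R) (x : X) : \bar R :=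
  ereal_sup [set (ys x)%:E - gAv A vs ys | ys in dual].

End Fitz.

(* The evaluation map a |-> (f |-> f a) sends X into the bidual, so the pairs
   (ys, a) are admissible in the supremum defining P_A; since
   phistar (ys, a) <= F_A (a, ys) <= P_A (a, ys), this yields the cross
   inequality  ys x + xs a <= P_A (x, xs) + P_A (a, ys),  which is the upper
   bound of both (i) and (ii).  For the lower bounds, on Gr(A) one has
   F_A (y, ys) <= ys y by monotonicity and P_A (y, ys) <= ys y by testing
   phistar against (y, ys); hence f_{A,w} and g_{A,vs} are bounded on the graph
   and each term of the supremum defining F_A is dominated by a term of the
   conjugate. *)

From mathcomp Require Import all_boot all_order all_algebra.
From mathcomp Require Import all_classical all_reals all_analysis.
From mathcomp Require Import lra.
Import Order.TTheory GRing.Theory Num.Theory.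
Local Open Scope ereal_scope.

Section ExtendedRealSwap.
Variable R : realType.

Lemma EFinB_le_swap (r : R) (p q : \bar R) : r%:E - q <= p -> r%:E - p <= q.
Proof.
case: p => [p||]; case: q => [q||] //=; rewrite ?lee_fin.
- by move=> h; lra.
- by rewrite leey.
- by rewrite addeNy leNye.
Qed.

Lemma EFinDB_le_swap (r s : R) (p q : \bar R) :
  (r + s)%R%:E - p <= q -> r%:E - q <= p - s%:E.
Proof.
case: p => [p||]; case: q => [q||] //=; rewrite ?lee_fin.
- by move=> h; lra.
- by rewrite addeNy leNye.
- by rewrite addye // leey.
Qed.

End ExtendedRealSwap.

Section LinearFunctionals.
Context {R : realType} {X : normedModType R} {f : X -> R} (f_lin : lin_fun f).
Local Open Scope ring_scope.

Lemma lin_fun0 : f 0 = 0.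
Proof. by have := f_lin 1 0 0; rewrite scale1r addr0 mul1r => h; lra. Qed.

Lemma lin_funZ (c : R) (u : X) : f (c *: u) = c * f u.
Proof. by have := f_lin c u 0; rewrite addr0 lin_fun0 addr0. Qed.

Lemma lin_funB (u v : X) : f (u - v) = f u - f v.
Proof. by have := f_lin (-1) v u; rewrite scaleN1r addrC => ->; lra. Qed.

Lemma lin_fun_norm_le (a : X) : ((`|f a|)%:E <= (`|a|)%:E * dnorm f)%E.
Proof.
have [->|a_neq0] := eqVneq a 0; first by rewrite lin_fun0 !normr0 mul0e.
have a_gt0 : 0 < `|a| by rewrite normr_gt0.
set u := `|a|^-1 *: a.
have fa : f a = `|a| * f u by rewrite lin_funZ mulrA mulfV ?mul1r ?gt_eqF.
have u_le1 : `|u| <= 1.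
  by rewrite normrZ normfV normr_id mulVf ?gt_eqF.
have fu_le : ((`|f u|)%:E <= dnorm f)%E by apply: ereal_sup_ubound; exists u.
rewrite fa normrM gtr0_norm // EFinM.
by apply: lee_wpmul2l => //; rewrite lee_fin ltW.
Qed.

End LinearFunctionals.

Lemma eval_bidual (R : realType) (X : normedModType R) (a : X) :
  bidual (fun f : X -> R => f a).
Proof.
split=> //; split=> //.
by exists `|a|%R => f [f_lin _]; exact: lin_fun_norm_le.
Qed.

Section FitzpatrickBounds.
Variables (R : realType) (X : normedModType R) (A : X -> (X -> R) -> Prop).
Hypothesis A_dual : forall {x xs}, A x xs -> dual xs.
Hypothesis A_mono : monotone_op A.

Lemma phistar_eval_le_Fitz (a : X) (ys : X -> R) :
  phistar A ys (fun f => f a) <= Fitz A a ys.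
Proof.
apply: ge_ereal_sup => _ [p _ <-].
rewrite /phiA; case: asboolP => [p_graph|_]; last by rewrite addeNy leNye.
by rewrite -EFinB; apply: ereal_sup_ubound; exists p.
Qed.

Lemma PA_ge_Fitz (x a : X) (xs ys : X -> R) : dual ys ->
  (ys x + xs a)%R%:E - Fitz A a ys <= PA A x xs.
Proof.
move=> ys_dual; apply: le_trans (_ : _ - phistar A ys (fun f => f a) <= _).
  exact/leeB/phistar_eval_le_Fitz.
apply: ereal_sup_ubound; exists (ys, fun f => f a) => //.
by split=> //; exact: eval_bidual.
Qed.

Lemma Fitz_le_graph {y : X} {ys : X -> R} : A y ys -> Fitz A y ys <= (ys y)%:E.
Proof.
move=> y_ys; apply: ge_ereal_sup => _ [p p_graph <-]; rewrite lee_fin.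
have [[p_lin _] [ys_lin _]] := (A_dual p_graph, A_dual y_ys).
have := A_mono _ _ _ _ y_ys p_graph.
by rewrite (lin_funB p_lin) (lin_funB ys_lin); lra.
Qed.

Lemma PA_le_graph {y : X} {ys : X -> R} : A y ys -> PA A y ys <= (ys y)%:E.
Proof.
move=> y_ys; apply: ge_ereal_sup => _ [q _ <-]; apply: EFinB_le_swap.
apply: ereal_sup_ubound; exists (y, ys); first exact: A_dual y_ys.
by rewrite /phiA /= asboolT.
Qed.

Lemma Fitz_le_PA (a : X) (ys : X -> R) : Fitz A a ys <= PA A a ys.
Proof.
apply: ge_ereal_sup => _ [p p_graph <-].
apply: le_trans (PA_ge_Fitz a p.1 ys p.2 (A_dual p_graph)).
apply: le_trans (leeB (lexx _) (Fitz_le_graph p_graph)).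
by rewrite -EFinB lee_fin; lra.
Qed.

Lemma PA_cross_bound (x a : X) (xs ys : X -> R) : dual ys ->
  (ys x + xs a)%R%:E - PA A a ys <= PA A x xs.
Proof.
move=> ys_dual; apply: le_trans (PA_ge_Fitz x a xs ys ys_dual).
exact/leeB/Fitz_le_PA.
Qed.

Lemma gAv_le_graph (vs : X -> R) {y : X} {ys : X -> R} : A y ys ->
  gAv A vs ys <= (ys y)%:E - (vs y)%:E.
Proof.
move=> y_ys; apply: le_trans (leeB (PA_le_graph y_ys) (lexx _)).
by apply: ereal_inf_lbound; exists y.
Qed.

Lemma fAw_le_graph (w : X) {y : X} {ys : X -> R} : A y ys ->
  fAw A w y <= (ys y)%:E - (ys w)%:E.
Proof.
move=> y_ys; apply: le_trans (leeB (PA_le_graph y_ys) (lexx _)).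
by apply: ereal_inf_lbound; exists ys; first exact: A_dual y_ys.
Qed.

Lemma Fitz_le_gAv_conj (vs : X -> R) (x : X) : Fitz A x vs <= gAv_conj A vs x.
Proof.
apply: ge_ereal_sup => _ [p p_graph <-].
apply: le_trans (_ : (p.2 x)%:E - gAv A vs p.2 <= _); last first.
  by apply: ereal_sup_ubound; exists p.2; first exact: A_dual p_graph.
apply: le_trans (leeB (lexx _) (gAv_le_graph vs p_graph)).
by rewrite -!EFinB lee_fin; lra.
Qed.

Lemma gAv_conj_le_PA (vs : X -> R) (x : X) : gAv_conj A vs x <= PA A x vs.
Proof.
apply: ge_ereal_sup => _ [ys ys_dual <-]; apply: EFinB_le_swap.
apply: le_ereal_inf_tmp => _ [a _ <-].
exact/EFinDB_le_swap/PA_cross_bound.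
Qed.

Lemma Fitz_le_fAw_conj (w : X) (xs : X -> R) : Fitz A w xs <= fAw_conj A w xs.
Proof.
apply: ge_ereal_sup => _ [p p_graph <-].
apply: le_trans (_ : (xs p.1)%:E - fAw A w p.1 <= _); last first.
  by apply: ereal_sup_ubound; exists p.1.
apply: le_trans (leeB (lexx _) (fAw_le_graph w p_graph)).
by rewrite -!EFinB lee_fin; lra.
Qed.

Lemma fAw_conj_le_PA (w : X) (xs : X -> R) : fAw_conj A w xs <= PA A w xs.
Proof.
apply: ge_ereal_sup => _ [y _ <-]; apply: EFinB_le_swap.
apply: le_ereal_inf_tmp => _ [a a_dual <-].
by apply/EFinDB_le_swap; rewrite (addrC (xs y) (a w)); exact: PA_cross_bound.
Qed.

End FitzpatrickBounds.

Theorem lemma3p4 (R : realType) (X : completeNormedModType R)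
  (A : X -> (X -> R) -> Prop) :
  maximal_monotone A ->
  forall (w : X) (vs : X -> R) (x : X) (xs : X -> R),
    domA A w -> ImA A vs -> dual xs ->
    (Fitz A x vs <= gAv_conj A vs x /\ gAv_conj A vs x <= PA A x vs) /\
    (Fitz A w xs <= fAw_conj A w xs /\ fAw_conj A w xs <= PA A w xs).
Proof.
move=> [A_dual [A_mono _]] w vs x xs _ _ _.
split; split.
- exact: Fitz_le_gAv_conj.
- exact: gAv_conj_le_PA.
- exact: Fitz_le_fAw_conj.
- exact: fAw_conj_le_PA.
Qed.
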